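(* The subgroup $\mathrm{B}_2(\mathbb{C}[z])$ of upper triangular matrices of $\mathrm{GL}_2(\mathbb{C}[z])$ is a maximal solvable subgroup: every subgroup of $\mathrm{GL}_2(\mathbb{C}[z])$ strictly containing it is not solvable.
   Context: $\mathrm{GL}_2(\mathbb{C}[z])$ is the group of $2\times2$ matrices over the polynomial ring $\mathbb{C}[z]$ that are invertible over $\mathbb{C}[z]$ (determinant in $\mathbb{C}^*$). *)

From mathcomp Require Import all_boot all_algebra.
From mathcomp Require Import reals Rstruct.
From mathcomp.real_closed Require Import complex.
Set Implicit Arguments. Unset Strict Implicit. Unset Printing Implicit Defensive.
Import GRing.Theory.
Local Open Scope ring_scope.

Definition CC : idomainType := complex Rdefinitions.R.

Definition M2 := 'M[{poly CC}]_2.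

Definition GL2 : M2 -> Prop := fun A => A \in unitmx.

Definition B2 : M2 -> Prop :=
  fun A => GL2 A /\ (forall i j : 'I_2, (j < i)%N -> A i j = 0).

Definition is_subgroup_GL2 (H : M2 -> Prop) : Prop :=
  (forall A, H A -> GL2 A) /\ H 1 /\
  (forall A B, H A -> H B -> H (A * B)) /\ (forall A, H A -> H A^-1).

Definition commg_r {T : unitRingType} (a b : T) : T := a^-1 * b^-1 * a * b.

(* The derived subgroup [H, H]: the subgroup generated by the commutators of
   elements of H, i.e. all finite products of such commutators (the set of
   commutators is closed under inversion). *)
Definition derived {T : unitRingType} (H : T -> Prop) : T -> Prop :=
  fun x => exists s : seq (T * T),
    (forall p, List.In p s -> H p.1 /\ H p.2) /\
    x = foldr (fun p acc => commg_r p.1 p.2 * acc) 1 s.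

Definition derived_series {T : unitRingType} (n : nat) (H : T -> Prop) : T -> Prop :=
  iter n (@derived T) H.

Definition solvable_grp {T : unitRingType} (H : T -> Prop) : Prop :=
  exists n : nat, forall x, derived_series n H x <-> x = 1.

(* Upper triangular invertible 2x2 matrices form a metabelian group: their
   commutators are upper unitriangular, i.e. upper transvections, and these
   commute.  Conversely, let H contain B_2(C[z]) and a matrix A with nonzero
   lower-left entry, and pick z where that entry does not vanish.  Evaluation
   at z is a ring morphism, and the image of H contains every upper
   transvection (already in B_2) and every lower one (a conjugate of an upper
   one by an element of H), hence the elementary group E_2(C).  Since E_2(C)
   is perfect, the image of every term of the derived series of H contains
   E_2(C), so the derived series never reaches the trivial group. *)

From mathcomp Require Import all_boot all_algebra.
From mathcomp Require Import reals Rstruct.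
From mathcomp.real_closed Require Import complex.
From mathcomp Require Import ring.
Import GRing.Theory Num.Theory.
Local Open Scope ring_scope.

Section Matrix2.
Context {R : nzRingType}.

Definition mk2 (a b c d : R) : 'M[R]_2 :=
  \matrix_(i, j) if i == 0 then (if j == 0 then a else b) else (if j == 0 then c else d).

Lemma mk2M (a b c d a' b' c' d' : R) :
  mk2 a b c d * mk2 a' b' c' d' =
  mk2 (a * a' + b * c') (a * b' + b * d') (c * a' + d * c') (c * b' + d * d').
Proof.
apply/matrixP=> i j; rewrite !mxE !big_ord_recl big_ord0 !mxE.
by case: i => [[|[|//]] ?]; case: j => [[|[|//]] ?] /=; rewrite addr0.
Qed.

Lemma mk2_eta (X : 'M[R]_2) : X = mk2 (X 0 0) (X 0 1) (X 1 0) (X 1 1).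
Proof.
apply/matrixP=> i j; rewrite !mxE.
by case: i => [[|[|//]] ?]; case: j => [[|[|//]] ?] /=; congr (X _ _); apply: val_inj.
Qed.

Lemma mk2_1 : (1 : 'M[R]_2) = mk2 1 0 0 1.
Proof. by apply/matrixP=> i j; rewrite !mxE; case: i => [[|[|//]] ?]; case: j => [[|[|//]] ?]. Qed.

Lemma mk2_inj (a b c d a' b' c' d' : R) :
  mk2 a b c d = mk2 a' b' c' d' -> [/\ a = a', b = b', c = c' & d = d'].
Proof.
move=> /matrixP E; have := E 0 0; have := E 0 1; have := E 1 0; have := E 1 1.
by rewrite !mxE.
Qed.

Definition transvU (t : R) : 'M[R]_2 := mk2 1 t 0 1.
Definition transvL (t : R) : 'M[R]_2 := mk2 1 0 t 1.

End Matrix2.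

Lemma map_mk2 (R S : nzRingType) (f : R -> S) (a b c d : R) :
  map_mx f (mk2 a b c d) = mk2 (f a) (f b) (f c) (f d).
Proof. by apply/matrixP=> i j; rewrite !mxE; case: (i == 0); case: (j == 0). Qed.

Lemma mk2_det (R : comNzRingType) (a b c d : R) : \det (mk2 a b c d) = a * d - b * c.
Proof.
rewrite (expand_det_row _ 0) !big_ord_recl big_ord0.
by rewrite /cofactor !det_mx11 !mxE /bump /=; ring.
Qed.

Lemma mulmx_inv_eq (R : comUnitRingType) n (X Y : 'M[R]_n.+1) : X * Y = 1 -> X^-1 = Y.
Proof.
move=> XY1; have [uX _] := mulmx1_unit XY1.
by rewrite -[Y]mul1r -(mulVr uX) -mulrA XY1 mulr1.
Qed.

Section Derived.
Context {T : unitRingType} (H : T -> Prop).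

Lemma derived1 : derived H 1.
Proof. by exists [::]. Qed.

Lemma derivedM x y : derived H x -> derived H y -> derived H (x * y).
Proof.
move=> [s1 [Hs1 ->]] [s2 [Hs2 ->]]; exists (s1 ++ s2); split.
  by move=> p; rewrite List.in_app_iff => -[/Hs1 | /Hs2].
by elim: s1 {Hs1} => [|q s1 IH] /=; rewrite ?mul1r // -mulrA IH.
Qed.

Lemma derived_commg x y : H x -> H y -> derived H (commg_r x y).
Proof. by move=> Hx Hy; exists [:: (x, y)]; split=> [p [<- | []] | ]; rewrite /= ?mulr1. Qed.

Lemma derived_ind (P : T -> Prop) : P 1 -> (forall x y, P x -> P y -> P (x * y)) ->
  (forall x y, H x -> H y -> P (commg_r x y)) -> forall x, derived H x -> P x.
Proof.
move=> P1 PM Pcomm _ [s [Hs ->]]; elim: s Hs => [|[x y] s IH] Hs //=.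
have [Hx Hy] := Hs _ (or_introl erefl).
by apply: PM; [exact: Pcomm | apply: IH => p sp; apply: Hs; right].
Qed.

End Derived.

Lemma derived_mono (T : unitRingType) (H K : T -> Prop) :
  (forall x, H x -> K x) -> forall x, derived H x -> derived K x.
Proof.
move=> HK; apply: derived_ind; [exact: derived1 | exact: derivedM |].
by move=> x y Hx Hy; apply: derived_commg; apply: HK.
Qed.

Lemma perfect_sub_derived_series (T : unitRingType) (P : T -> Prop) :
  (forall x, P x -> derived P x) -> forall n x, P x -> derived_series n P x.
Proof.
move=> Pperfect; elim=> [//|n IH] x /Pperfect.
exact: derived_mono IH x.
Qed.

Section UnitImage.
Context {R S : unitRingType} (f : {rmorphism R -> S}) (H : R -> Prop).

Definition unit_image (y : S) : Prop := exists x, [/\ H x, x \is a GRing.unit & f x = y].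

Lemma unit_imageM y1 y2 : (forall x1 x2, H x1 -> H x2 -> H (x1 * x2)) ->
  unit_image y1 -> unit_image y2 -> unit_image (y1 * y2).
Proof.
move=> HM [x1 [Hx1 ux1 <-]] [x2 [Hx2 ux2 <-]].
by exists (x1 * x2); split; [exact: HM | rewrite unitrMl | rewrite rmorphM].
Qed.

End UnitImage.

Section DerivedImage.
Context {R S : unitRingType} {f : {rmorphism R -> S}}.

Lemma derived_unit_image {H : R -> Prop} {P : S -> Prop} :
  (forall y, P y -> unit_image f H y) ->
  forall y, derived P y -> unit_image f (derived H) y.
Proof.
move=> PH; apply: derived_ind.
- by exists 1; rewrite rmorph1 unitr1; split=> //; exact: derived1.
- by move=> y1 y2; apply: unit_imageM; exact: derivedM.
move=> _ _ /PH [x [Hx ux <-]] /PH [y [Hy uy <-]].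
exists (commg_r x y); split; first exact: derived_commg.
  by rewrite /commg_r !unitrMl ?unitrV.
by rewrite /commg_r !rmorphM !rmorphV.
Qed.

Lemma derived_series_unit_image {H : R -> Prop} {P : S -> Prop} :
  (forall y, P y -> unit_image f H y) ->
  forall n y, derived_series n P y -> unit_image f (derived_series n H) y.
Proof. by move=> PH; elim=> [//|n IH] y; apply: derived_unit_image. Qed.

End DerivedImage.

Lemma map_mx_transvU (R : comNzRingType) (z : R) p :
  map_mx (horner_eval z) (transvU p) = transvU p.[z].
Proof. by rewrite /transvU map_mk2 /horner_eval horner0 hornerC. Qed.

Section Transvections.
Context {R : comUnitRingType}.
Implicit Types b c : R.

Lemma transvUD b c : transvU b * transvU c = transvU (b + c).
Proof. by rewrite /transvU mk2M; congr mk2; ring. Qed.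

Lemma transvLD b c : transvL b * transvL c = transvL (b + c).
Proof. by rewrite /transvL mk2M; congr mk2; ring. Qed.

Lemma transvUV b : (transvU b)^-1 = transvU (- b).
Proof. by apply: mulmx_inv_eq; rewrite transvUD subrr mk2_1. Qed.

Lemma transvLV b : (transvL b)^-1 = transvL (- b).
Proof. by apply: mulmx_inv_eq; rewrite transvLD subrr mk2_1. Qed.

End Transvections.

Section UpperTriangular.
Context {R : comUnitRingType}.
Implicit Types (A X Y : 'M[R]_2) (a b d : R).

Definition upper_unitmx A : Prop :=
  A \in unitmx /\ (forall i j : 'I_2, (j < i)%N -> A i j = 0).

Lemma upper_unitmxE A : upper_unitmx A <-> A \in unitmx /\ A 1 0 = 0.
Proof.
split=> [[uA A0] | [uA A10]]; first by split=> //; apply: A0.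
split=> // i j; case: i => [[|[|//]] ?]; case: j => [[|[|//]] ?] //= _.
by rewrite -A10; congr (A _ _); apply: val_inj.
Qed.

Lemma unitmx_upper a b d : (mk2 a b 0 d \in unitmx) = (a \is a GRing.unit) && (d \is a GRing.unit).
Proof. by rewrite unitmxE mk2_det mulr0 subr0 unitrM. Qed.

Lemma invmx_upper a b d : a \is a GRing.unit -> d \is a GRing.unit ->
  (mk2 a b 0 d)^-1 = mk2 a^-1 (- (a^-1 * b * d^-1)) 0 d^-1.
Proof.
move=> ua ud; apply: mulmx_inv_eq; rewrite mk2M mk2_1.
congr mk2; rewrite ?(mulr0, mul0r, addr0, add0r, mulrV) //.
by rewrite mulrN !mulrA mulrV // mul1r addNr.
Qed.

Lemma upper_unitmxP A : upper_unitmx A ->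
  exists a b d, [/\ A = mk2 a b 0 d, a \is a GRing.unit & d \is a GRing.unit].
Proof.
move=> /upper_unitmxE [uA A10]; rewrite (mk2_eta A) A10 unitmx_upper in uA *.
by case/andP: uA => ua ud; exists (A 0 0), (A 0 1), (A 1 1).
Qed.

Lemma upper_unitmx_mk2 a b d : a \is a GRing.unit -> d \is a GRing.unit ->
  upper_unitmx (mk2 a b 0 d).
Proof. by move=> ua ud; apply/upper_unitmxE; rewrite unitmx_upper ua ud mxE. Qed.

Lemma upper_unitmx_transvU b : upper_unitmx (transvU b).
Proof. by apply: upper_unitmx_mk2; rewrite unitr1. Qed.

Lemma upper_unitmx1 : upper_unitmx 1.
Proof. by rewrite mk2_1; apply: upper_unitmx_transvU. Qed.

Lemma upper_unitmxM X Y : upper_unitmx X -> upper_unitmx Y -> upper_unitmx (X * Y).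
Proof.
move=> /upper_unitmxP [a [b [d [-> ua ud]]]] /upper_unitmxP [a' [b' [d' [-> ua' ud']]]].
by rewrite mk2M !(mulr0, mul0r, add0r, addr0); apply: upper_unitmx_mk2; rewrite unitrMl.
Qed.

Lemma upper_unitmxV X : upper_unitmx X -> upper_unitmx X^-1.
Proof.
move=> /upper_unitmxP [a [b [d [-> ua ud]]]].
by rewrite invmx_upper //; apply: upper_unitmx_mk2; rewrite unitrV.
Qed.

Lemma commg_upper_unitmx X Y : upper_unitmx X -> upper_unitmx Y ->
  exists b, commg_r X Y = transvU b.
Proof.
move=> /upper_unitmxP [a [b [d [-> ua ud]]]] /upper_unitmxP [a' [b' [d' [-> ua' ud']]]].
rewrite /commg_r !invmx_upper // !mk2M; eexists; congr mk2; last first.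
- by ring: (mulVr ud) (mulVr ud').
- by ring.
- by ring: (mulVr ua) (mulVr ua').
Qed.

Lemma commg_transvU b b' : commg_r (transvU b) (transvU b') = 1.
Proof. by rewrite /commg_r !transvUV !transvUD mk2_1 /transvU; congr mk2; ring. Qed.

Lemma solvable_upper_unitmx : solvable_grp upper_unitmx.
Proof.
exists 2 => x; split=> [|->]; last exact: derived1.
have der_upper : forall y, derived upper_unitmx y -> exists b, y = transvU b.
  apply: derived_ind; first by exists 0; rewrite mk2_1.
    by move=> _ _ [b ->] [b' ->]; exists (b + b'); rewrite transvUD.
  exact: commg_upper_unitmx.
apply: (@derived_ind _ _ (fun y => y = 1)) => //.
  by move=> y y' -> ->; rewrite mulr1.
by move=> _ _ /der_upper [b ->] /der_upper [b' ->]; apply: commg_transvU.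
Qed.

End UpperTriangular.

Section Elementary.
Context {F : fieldType}.
Implicit Types (x t : F) (M N : 'M[F]_2).

Definition diag2 x : 'M[F]_2 := mk2 x 0 0 x^-1.

Inductive elementary : 'M[F]_2 -> Prop :=
| elementary1 : elementary 1
| elementaryU t M : elementary M -> elementary (transvU t * M)
| elementaryL t M : elementary M -> elementary (transvL t * M).

Lemma elementaryM M N : elementary M -> elementary N -> elementary (M * N).
Proof. by elim=> [|t {}M _ IH|t {}M _ IH] EN; rewrite ?mul1r // -mulrA; constructor; apply: IH. Qed.

Lemma elementary_transvU t : elementary (transvU t).
Proof. by rewrite -[transvU t]mulr1; do 2 constructor. Qed.

Lemma elementary_transvL t : elementary (transvL t).
Proof. by rewrite -[transvL t]mulr1; do 2 constructor. Qed.

Lemma elementary_diag2 x : x != 0 -> elementary (diag2 x).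
Proof.
move=> x0; have -> : diag2 x = transvU x * transvL (- x^-1) * transvU x *
                    (transvU (-1) * transvL 1 * transvU (-1)).
  by rewrite /diag2 /transvU /transvL !mk2M; congr mk2; field.
by do ![apply: elementaryM | apply: elementary_transvU | apply: elementary_transvL].
Qed.

Lemma diag2V x : x != 0 -> (diag2 x)^-1 = diag2 x^-1.
Proof.
move=> x0; apply: mulmx_inv_eq; rewrite /diag2 mk2M mk2_1.
by congr mk2; field; rewrite x0 ?oner_neq0.
Qed.

Lemma commg_diag2_transvU x t : x != 0 ->
  commg_r (diag2 x) (transvU t) = transvU ((1 - x ^- 2) * t).
Proof.
move=> x0; rewrite /commg_r diag2V // transvUV /diag2 /transvU !mk2M.
by congr mk2; field; rewrite x0 ?oner_neq0.
Qed.

Lemma commg_diag2_transvL x t : x != 0 ->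
  commg_r (diag2 x) (transvL t) = transvL ((1 - x ^+ 2) * t).
Proof.
move=> x0; rewrite /commg_r diag2V // transvLV /diag2 /transvL !mk2M.
by congr mk2; field; rewrite x0 ?oner_neq0.
Qed.

Lemma elementary_sub_derived x : x != 0 -> x ^+ 2 != 1 ->
  forall M, elementary M -> derived elementary M.
Proof.
move=> x0 x2; have Ex : elementary (diag2 x) by exact: elementary_diag2.
have U0 : 1 - x ^- 2 != 0 by rewrite subr_eq0 eq_sym invr_eq1.
have L0 : 1 - x ^+ 2 != 0 by rewrite subr_eq0 eq_sym.
move=> M; elim=> [|t {}M _ IH|t {}M _ IH]; first exact: derived1.
- rewrite -[t](mulVKf U0) -commg_diag2_transvU //.
  by apply: derivedM IH; apply: derived_commg => //; apply: elementary_transvU.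
- rewrite -[t](mulVKf L0) -commg_diag2_transvL //.
  by apply: derivedM IH; apply: derived_commg => //; apply: elementary_transvL.
Qed.

Lemma transvL_conj N t : N 1 0 != 0 -> N \is a GRing.unit ->
  exists u s, transvL t = transvU u * N * transvU s * (transvU u * N)^-1.
Proof.
move=> + uN; move: (N 0 0) (N 0 1) (N 1 0) (N 1 1) (mk2_eta N) => a b c d EN c0.
exists (- (a / c)), (t * (b - a * d / c) / c).
have [uU _] := upper_unitmx_transvU (- (a / c)).
apply: (canRL (mulrK _)); first by rewrite unitrMr.
by rewrite EN /transvL /transvU !mk2M; congr mk2; field.
Qed.

End Elementary.

Section Overgroup.
Context {F : numClosedFieldType}.
Variable H : 'M[{poly F}]_2 -> Prop.
Hypotheses (H_unit : forall A, H A -> A \in unitmx)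
           (HM : forall A B, H A -> H B -> H (A * B))
           (HV : forall A, H A -> H A^-1)
           (upper_sub : forall A, upper_unitmx A -> H A).

Lemma elementary_unit_image z A : H A -> (A 1 0).[z] != 0 ->
  forall M, elementary M -> unit_image (map_mx (horner_eval z)) H M.
Proof.
move=> HA Az; pose f : {rmorphism 'M[{poly F}]_2 -> 'M[F]_2} := map_mx (horner_eval z).
have HU p : H (transvU p) by apply/upper_sub/upper_unitmx_transvU.
have fU c : f (transvU c%:P) = transvU c by rewrite [f _]map_mx_transvU hornerC.
have imU t : unit_image f H (transvU t).
  by exists (transvU t%:P); split=> //; apply: H_unit.
have imL t : unit_image f H (transvL t).
  have uA : A \is a GRing.unit by apply: H_unit.
  have [||u [s ->]] := @transvL_conj _ (f A) t; [by rewrite mxE | exact: rmorph_unit |].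
  pose X := transvU u%:P * A.
  have HX : H X by apply: HM.
  have uX : X \is a GRing.unit by apply: H_unit.
  exists (X * transvU s%:P * X^-1); split.
  - by apply: HM; [apply: HM | apply: HV].
  - by apply: H_unit; apply: HM; [apply: HM | apply: HV].
  - by rewrite !rmorphM rmorphV // rmorphM !fU.
move=> M; elim=> [|t {}M _ IH|t {}M _ IH].
- by exists 1; rewrite rmorph1 unitr1; split=> //; apply: upper_sub upper_unitmx1.
- exact: unit_imageM HM (imU t) IH.
- exact: unit_imageM HM (imL t) IH.
Qed.

Lemma overgroup_not_solvable : (exists A, H A /\ ~ upper_unitmx A) -> ~ solvable_grp H.
Proof.
move=> [A [HA notUA]] [n Hn].
have A10 : A 1 0 != 0.
  by apply/eqP => A10; apply: notUA; apply/upper_unitmxE; split=> //; apply: H_unit.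
have /closed_nonrootP [z Az] := A10.
have two0 : (2 : F) != 0 by rewrite pnatr_eq0.
have two2 : (2 : F) ^+ 2 != 1 by rewrite -natrX pnatr_eq1.
have := elementary_sub_derived _ two0 two2.
move=> /perfect_sub_derived_series /(_ n _ (elementary_transvU 1)).
case/(derived_series_unit_image (elementary_unit_image _ _ HA Az)) => X [/Hn -> _].
by rewrite rmorph1 mk2_1 => /mk2_inj [_ /eqP]; rewrite eq_sym oner_eq0.
Qed.

End Overgroup.

Theorem lemma3p23 :
  is_subgroup_GL2 B2 /\ solvable_grp B2 /\
  (forall H : M2 -> Prop, is_subgroup_GL2 H ->
     (forall A, B2 A -> H A) -> (exists A, H A /\ ~ B2 A) ->
     ~ solvable_grp H).
Proof.
split; last split.
- split; first by move=> A [].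
  split; first exact: upper_unitmx1.
  by split; [exact: upper_unitmxM | exact: upper_unitmxV].
- exact: solvable_upper_unitmx.
move=> H [H_unit [_ [HM HV]]] B2_sub_H.
exact: (@overgroup_not_solvable (complex Rdefinitions.R) H H_unit HM HV B2_sub_H).
Qed.
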